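(* Let $V$ be a bounded, noncompact operator in a Hilbert space $H$, and let $V_{i,j}$ ($i,j=0,1,2,\dots$) be its matrix in some orthonormal basis of $H$, satisfying $$ \lim_{n\to\infty} V_{n,n+p}=0\quad\text{for every } p\in\mathbb{Z}. $$ Let $b=\{b_i\}_{i=-\infty}^{\infty}$ be an arbitrary sequence with $\sum_{i=-\infty}^{\infty}|b_i|^2<\infty$. Then the operator $K$ whose matrix in the same basis is $K_{i,j}=b_{i-j}V_{i,j}$ ($i,j=0,1,2,\dots$) is a compact operator on $H$. *)

From Stdlib Require Import Reals ZArith Arith.
From Coquelicot Require Import Coquelicot.
Open Scope R_scope.

(* The separable Hilbert space H with orthonormal basis (e_j)_{j in nat}
   is modelled (up to unitary equivalence) as l^2(N; C). *)
Definition l2 (x : nat -> C) : Prop := ex_series (fun i => (Cmod (x i)) ^ 2).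

Definition l2norm (x : nat -> C) : R := sqrt (Series (fun i => (Cmod (x i)) ^ 2)).

Definition basis_vec (j : nat) : nat -> C :=
  fun i => if Nat.eqb i j then 1%C else 0%C.

Definition bounded_op (T : (nat -> C) -> (nat -> C)) : Prop :=
  (forall x, l2 x -> l2 (T x)) /\
  (forall (x y : nat -> C) (a : C), l2 x -> l2 y -> forall i,
      T (fun k => Cplus (x k) (Cmult a (y k))) i = Cplus (T x i) (Cmult a (T y i))) /\
  (exists M : R, forall x, l2 x -> l2norm (T x) <= M * l2norm x).

(* Matrix of T in the basis: T_{i,j} = (T e_j, e_i) = i-th coordinate of T e_j *)
Definition mat (T : (nat -> C) -> (nat -> C)) (i j : nat) : C := T (basis_vec j) i.

Definition compact_op (T : (nat -> C) -> (nat -> C)) : Prop :=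
  forall u : nat -> (nat -> C),
    (forall n, l2 (u n)) ->
    (exists M : R, forall n, l2norm (u n) <= M) ->
    exists (phi : nat -> nat) (y : nat -> C),
      (forall n, (phi n < phi (S n))%nat) /\ l2 y /\
      is_lim_seq (fun n => l2norm (fun i => Cminus (T (u (phi n)) i) (y i))) 0.

Definition l2Z (b : Z -> C) : Prop :=
  ex_series (fun n => (Cmod (b (Z.of_nat n))) ^ 2) /\
  ex_series (fun n => (Cmod (b (- Z.of_nat n)%Z)) ^ 2).

From Stdlib Require Import Reals ZArith Arith Lia Lra Psatz.
From Stdlib Require Import FunctionalExtensionality ClassicalEpsilon.
From Coquelicot Require Import Coquelicot.
Open Scope R_scope.

(* The operator [K] with matrix [b_(i-j) V_(i,j)] is the Schur product of [V] with the
   Toeplitz matrix of [b].  Cauchy-Schwarz in each row bounds [|(K x)_i|^2] by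
   [||b||^2 sum_j |V_(i,j)|^2 |x_j|^2], whence [||K|| <= ||b|| ||V||].  For compactness, split
   [b] into finitely many terms and a remainder of small [l^2] norm: the remainder gives an
   operator of small norm, while on the finitely many remaining diagonals the entries of [V]
   tend to zero, so that part maps weakly null sequences to norm null ones. *)

(** * Finite sums *)

(* [psum a n] sums the [n] terms [a 0], ..., [a (n-1)] (Coquelicot's [sum_n a n] has [n+1]). *)
Fixpoint psum (a : nat -> R) (n : nat) : R :=
  match n with O => 0 | S n => psum a n + a n end.

Lemma psum_ext a b n : (forall k, (k < n)%nat -> a k = b k) -> psum a n = psum b n.
Proof.
  induction n as [|n IH]; intros H; simpl; auto.
  rewrite IH by (intros; apply H; lia). now rewrite H by lia.
Qed.

Lemma psum_le a b n : (forall k, (k < n)%nat -> a k <= b k) -> psum a n <= psum b n.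
Proof.
  induction n as [|n IH]; intros H; simpl; [lra|].
  assert (psum a n <= psum b n) by (apply IH; intros; apply H; lia).
  assert (a n <= b n) by (apply H; lia). lra.
Qed.

Lemma psum_nonneg a n : (forall k, 0 <= a k) -> 0 <= psum a n.
Proof. intros H; induction n; simpl; [lra|]. specialize (H n); lra. Qed.

Lemma psum_mono a m n : (forall k, 0 <= a k) -> (m <= n)%nat -> psum a m <= psum a n.
Proof. intros H Hmn; induction Hmn; simpl; [lra|]. specialize (H m0); lra. Qed.

Lemma psum_plus a b n : psum (fun k => a k + b k) n = psum a n + psum b n.
Proof. induction n; simpl; [lra|]. rewrite IHn; lra. Qed.

Lemma psum_scal c a n : psum (fun k => c * a k) n = c * psum a n.
Proof. induction n; simpl; [lra|]. rewrite IHn; lra. Qed.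

Lemma psum_const c n : psum (fun _ => c) n = INR n * c.
Proof. induction n; [simpl; lra|]. rewrite S_INR; simpl; rewrite IHn; lra. Qed.

Lemma psum_swap (f : nat -> nat -> R) m n :
  psum (fun i => psum (fun j => f i j) n) m = psum (fun j => psum (fun i => f i j) m) n.
Proof.
  induction m as [|m IH]; simpl.
  - induction n; simpl; lra.
  - rewrite IH. clear IH. induction n as [|n IH]; simpl; [lra|]. rewrite <- IH; lra.
Qed.

Lemma psum_term_le a n k : (forall j, 0 <= a j) -> (k < n)%nat -> a k <= psum a n.
Proof.
  intros H Hk. apply Rle_trans with (psum a (S k)).
  - simpl. pose proof (psum_nonneg a k H); lra.
  - apply psum_mono; auto.
Qed.

Lemma psum_head a J n :
  psum (fun k => if Nat.ltb k J then a k else 0) n = psum a (Nat.min n J).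
Proof.
  induction n as [|n IH]; [reflexivity|]. cbn [psum]. rewrite IH.
  destruct (Nat.ltb_spec n J).
  - replace (Nat.min (S n) J) with (S n) by lia. now replace (Nat.min n J) with n by lia.
  - replace (Nat.min (S n) J) with J by lia. replace (Nat.min n J) with J by lia. lra.
Qed.

Lemma psum_tail a J n :
  psum (fun k => if Nat.ltb k J then 0 else a k) n = psum a (Nat.max n J) - psum a J.
Proof.
  induction n as [|n IH]; cbn [psum].
  - replace (Nat.max 0 J) with J by lia. lra.
  - rewrite IH. destruct (Nat.ltb_spec n J).
    + replace (Nat.max (S n) J) with (Nat.max n J) by lia. lra.
    + replace (Nat.max (S n) J) with (S n) by lia. replace (Nat.max n J) with n by lia.
      cbn [psum]; lra.
Qed.

Lemma psum_drop_term g k K : (k < K)%nat ->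
  psum g K = psum (fun m => if Nat.eqb m k then 0 else g m) K + g k.
Proof.
  induction K as [|K IH]; intros Hk; [lia|]. cbn [psum]. destruct (Nat.eqb_spec K k).
  - subst. rewrite (psum_ext (fun m => if Nat.eqb m k then 0 else g m) g); [lra|].
    intros m Hm. destruct (Nat.eqb_spec m k); [lia|auto].
  - rewrite IH by lia. lra.
Qed.

Lemma psum_reindex_inj_le (g : nat -> R) (f : nat -> nat) N K :
  (forall k, 0 <= g k) -> (forall j, (j < N)%nat -> (f j < K)%nat) ->
  (forall j j', (j < N)%nat -> (j' < N)%nat -> f j = f j' -> j = j') ->
  psum (fun j => g (f j)) N <= psum g K.
Proof.
  revert g. induction N as [|N IH]; intros g Hg Hf Hi; cbn [psum]; [now apply psum_nonneg|].
  set (g' := fun m => if Nat.eqb m (f N) then 0 else g m).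
  rewrite (psum_drop_term g (f N) K) by (apply Hf; lia). fold g'.
  assert (E : psum (fun j => g (f j)) N = psum (fun j => g' (f j)) N).
  { apply psum_ext. intros j Hj. subst g'. cbv beta.
    destruct (Nat.eqb_spec (f j) (f N)) as [e|]; auto. apply Hi in e; lia. }
  assert (psum (fun j => g' (f j)) N <= psum g' K).
  { apply IH; [|intros; apply Hf; lia|intros; apply Hi; auto; lia].
    intro m; subst g'; cbv beta; destruct (Nat.eqb m (f N)); auto; lra. }
  lra.
Qed.

Lemma finite_bound (f : nat -> nat) N : exists K, forall j, (j < N)%nat -> (f j < K)%nat.
Proof.
  induction N as [|N [K HK]]; [exists 0%nat; lia|].
  exists (Nat.max K (S (f N))). intros j Hj.
  destruct (Nat.eq_dec j N); [subst; lia|]. specialize (HK j ltac:(lia)); lia.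
Qed.

Lemma is_lim_seq_psum (s : nat -> nat -> R) (a : nat -> R) L :
  (forall k, (k < L)%nat -> is_lim_seq (fun n => s n k) (a k)) ->
  is_lim_seq (fun n => psum (s n) L) (psum a L).
Proof.
  induction L as [|L IH]; intros H; simpl; [apply is_lim_seq_const|].
  apply is_lim_seq_plus'; [apply IH; intros; apply H; lia|apply H; lia].
Qed.

Lemma is_lim_seq_psum_Series a : ex_series a -> is_lim_seq (psum a) (Series a).
Proof.
  intros Ha. apply is_lim_seq_incr_1.
  assert (E : forall n, psum a (S n) = sum_n a n).
  { induction n as [|n IH]; [simpl; rewrite sum_O; lra|].
    rewrite sum_Sn, <- IH. reflexivity. }
  eapply is_lim_seq_ext; [intro n; symmetry; apply E|]. apply (Series_correct a Ha).
Qed.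

Lemma psum_le_Series a n : (forall k, 0 <= a k) -> ex_series a -> psum a n <= Series a.
Proof.
  intros Ha Hs. apply (is_lim_seq_incr_compare (psum a)); [now apply is_lim_seq_psum_Series|].
  intro m; simpl; specialize (Ha m); lra.
Qed.

Lemma Series_nonneg a : (forall k, 0 <= a k) -> ex_series a -> 0 <= Series a.
Proof. intros Ha Hs. apply (psum_le_Series a 0 Ha Hs). Qed.

Lemma is_lim_seq_Series_minus_psum a : ex_series a ->
  is_lim_seq (fun n => Series a - psum a n) 0.
Proof.
  intros Ha. replace (Finite 0) with (Finite (Series a - Series a)) by (f_equal; ring).
  apply is_lim_seq_minus'; [apply is_lim_seq_const|now apply is_lim_seq_psum_Series].
Qed.

Lemma is_lim_seq_0_eventually_le u e : is_lim_seq u 0 -> 0 < e ->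
  exists N, forall n, (N <= n)%nat -> u n <= e.
Proof.
  intros Hu He. destruct (proj2 (is_lim_seq_spec _ _) Hu (mkposreal e He)) as [N HN].
  exists N. intros n Hn. specialize (HN n Hn). simpl in HN.
  rewrite Rminus_0_r in HN. apply Rabs_def2 in HN. lra.
Qed.

Lemma exists_pos_mult_le A e : 0 <= A -> 0 < e -> exists s, 0 < s /\ A * s <= e.
Proof.
  intros HA He. exists (e / (A + 1)). split; [apply Rdiv_lt_0_compat; lra|].
  apply Rmult_le_reg_r with (A + 1); [lra|].
  replace (A * (e / (A + 1)) * (A + 1)) with (A * e) by (field; lra). nra.
Qed.

Lemma ex_series_psum_bounded a c : (forall k, 0 <= a k) -> (forall n, psum a n <= c) ->
  ex_series a /\ Series a <= c.
Proof.
  intros Ha Hc.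
  assert (Hsum : forall n, sum_f_R0 a n = psum a (S n)).
  { induction n as [|n IH]; simpl in *; [lra|]. rewrite IH; reflexivity. }
  assert (G : Un_growing (sum_f_R0 a)).
  { intro m. rewrite !Hsum. simpl. specialize (Ha (S m)). lra. }
  assert (B : has_ub (sum_f_R0 a)) by (exists c; intros x [n ->]; rewrite Hsum; apply Hc).
  destruct (growing_cv _ G B) as [l Hl].
  assert (Hs : ex_series a) by (exists l; now apply is_series_Reals).
  split; [exact Hs|].
  apply (is_lim_seq_le _ _ _ _ Hc (is_lim_seq_psum_Series a Hs) (is_lim_seq_const c)).
Qed.

(** * Square-summable sequences *)

Definition sqmod (x : nat -> C) (k : nat) : R := Cmod (x k) ^ 2.

Lemma sqmod_nonneg x k : 0 <= sqmod x k.
Proof. apply pow_le, Cmod_ge_0. Qed.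

Lemma l2norm_nonneg x : 0 <= l2norm x.
Proof. apply sqrt_pos. Qed.

Lemma psum_sqmod_le_l2norm x n : l2 x -> psum (sqmod x) n <= l2norm x ^ 2.
Proof.
  intros H. unfold l2norm. rewrite pow2_sqrt by (apply Series_nonneg; [apply sqmod_nonneg|exact H]).
  apply psum_le_Series; [apply sqmod_nonneg|exact H].
Qed.

Lemma l2_psum_bounded x c : (forall n, psum (sqmod x) n <= c) -> l2 x /\ l2norm x <= sqrt c.
Proof.
  intros H. destruct (ex_series_psum_bounded (sqmod x) c (sqmod_nonneg x) H) as [E S].
  split; [exact E|]. now apply sqrt_le_1_alt.
Qed.

Lemma Cmod_le_l2norm x i : l2 x -> Cmod (x i) <= l2norm x.
Proof.
  intros H. rewrite <- (sqrt_pow2 (Cmod (x i))) by apply Cmod_ge_0.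
  apply sqrt_le_1_alt. apply Rle_trans with (psum (sqmod x) (S i)).
  - apply (psum_term_le (sqmod x)); [apply sqmod_nonneg|lia].
  - apply psum_le_Series; [apply sqmod_nonneg|exact H].
Qed.

Lemma Cmod_add_sqr_le (u v : C) : Cmod (u + v) ^ 2 <= 2 * Cmod u ^ 2 + 2 * Cmod v ^ 2.
Proof.
  pose proof (Cmod_triangle u v). pose proof (Cmod_ge_0 (u + v)).
  pose proof (Cmod_ge_0 u). pose proof (Cmod_ge_0 v).
  pose proof (pow2_ge_0 (Cmod u - Cmod v)). nra.
Qed.

Lemma l2_dominated x z y c d : l2 x -> l2 z -> 0 <= c -> 0 <= d ->
  (forall k, sqmod y k <= c * sqmod x k + d * sqmod z k) -> l2 y.
Proof.
  intros Hx Hz Hc Hd H.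
  apply (@ex_series_le R_AbsRing R_CompleteNormedModule (sqmod y)
           (fun k => c * sqmod x k + d * sqmod z k)).
  - intro k. change norm with Rabs. rewrite Rabs_pos_eq by apply sqmod_nonneg. apply H.
  - apply (ex_series_plus (fun k => scal c (sqmod x k)) (fun k => scal d (sqmod z k)));
      now apply (@ex_series_scal_l R_AbsRing R_NormedModule).
Qed.

Lemma l2_lincomb x y a : l2 x -> l2 y -> l2 (fun k => x k + a * y k)%C.
Proof.
  intros Hx Hy. apply (l2_dominated x y _ 2 (2 * Cmod a ^ 2)); auto; [lra| |].
  - pose proof (pow_le _ 2 (Cmod_ge_0 a)); lra.
  - intro k. unfold sqmod. rewrite Rmult_assoc, <- Rpow_mult_distr, <- Cmod_mult.
    apply Cmod_add_sqr_le.
Qed.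

Lemma l2_finite_support (x : nat -> C) N : (forall k, (N <= k)%nat -> x k = 0%C) -> l2 x.
Proof.
  intros H. apply (l2_psum_bounded x (psum (sqmod x) N)). intros n.
  rewrite (psum_ext _ (fun k => if Nat.ltb k N then sqmod x k else 0)).
  - rewrite psum_head. apply psum_mono; [apply sqmod_nonneg|lia].
  - intros k _. destruct (Nat.ltb_spec k N); auto.
    unfold sqmod. rewrite H, Cmod_0 by lia. simpl; ring.
Qed.

Lemma l2_zero : l2 (fun _ : nat => 0%C).
Proof. now apply (l2_finite_support _ 0). Qed.

Lemma l2_basis_vec j : l2 (basis_vec j).
Proof.
  apply (l2_finite_support _ (S j)). intros k Hk. unfold basis_vec.
  destruct (Nat.eqb_spec k j); [lia|reflexivity].
Qed.

Lemma l2norm_basis_vec_le j : l2norm (basis_vec j) <= 1.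
Proof.
  rewrite <- sqrt_1. apply l2_psum_bounded. intro n.
  assert (E : psum (sqmod (basis_vec j)) n = if Nat.leb n j then 0 else 1).
  { induction n as [|n IH]; [reflexivity|]. cbn [psum]. rewrite IH. unfold sqmod, basis_vec.
    destruct (Nat.eqb_spec n j), (Nat.leb_spec n j), (Nat.leb_spec (S n) j); try lia;
      rewrite ?Cmod_0, ?Cmod_1; simpl; lra. }
  rewrite E. destruct (Nat.leb n j); lra.
Qed.

Fixpoint cpsum (a : nat -> C) (n : nat) : C :=
  match n with O => 0%C | S n => (cpsum a n + a n)%C end.

Lemma Cmod_cpsum_le a n : Cmod (cpsum a n) <= psum (fun j => Cmod (a j)) n.
Proof.
  induction n as [|n IH]; simpl; [rewrite Cmod_0; lra|].
  eapply Rle_trans; [apply Cmod_triangle|lra].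
Qed.

Lemma psum_mult_sqr_le a b n :
  psum (fun j => a j * b j) n ^ 2 <= psum (fun j => a j ^ 2) n * psum (fun j => b j ^ 2) n.
Proof.
  induction n as [|n IH]; cbn [psum]; [lra|].
  set (S := psum (fun j => a j * b j) n) in *.
  set (A := psum (fun j => a j ^ 2) n) in *.
  set (B := psum (fun j => b j ^ 2) n) in *.
  assert (HA : 0 <= A) by (apply psum_nonneg; intro; apply pow2_ge_0).
  assert (HB : 0 <= B) by (apply psum_nonneg; intro; apply pow2_ge_0).
  clearbody S A B. set (x := a n) in *. set (y := b n) in *. clearbody x y.
  (* the cross term [2 x y S] is controlled by AM-GM applied to [A y^2] and [x^2 B] *)
  assert (Cross : 2 * x * y * S <= A * y ^ 2 + x ^ 2 * B).
  { apply Rsqr_incr_0_var; [|nra]. unfold Rsqr.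
    assert (4 * (x ^ 2 * y ^ 2) * S ^ 2 <= 4 * (x ^ 2 * y ^ 2) * (A * B))
      by (apply Rmult_le_compat_l; nra).
    pose proof (pow2_ge_0 (A * y ^ 2 - x ^ 2 * B)). nra. }
  nra.
Qed.

Lemma Cmod_cpsum_mult_sqr_le c d n :
  Cmod (cpsum (fun j => c j * d j)%C n) ^ 2 <= psum (sqmod c) n * psum (sqmod d) n.
Proof.
  pose proof (Cmod_cpsum_le (fun j => c j * d j)%C n) as H1.
  rewrite (psum_ext _ (fun j => Cmod (c j) * Cmod (d j))) in H1
    by (intros; apply Cmod_mult).
  pose proof (psum_mult_sqr_le (fun j => Cmod (c j)) (fun j => Cmod (d j)) n) as H2.
  eapply Rle_trans; [|exact H2]. apply pow_incr. split; [apply Cmod_ge_0|exact H1].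
Qed.

Lemma Rabs_Cmod_sub_le (u v : C) : Rabs (Cmod u - Cmod v) <= Cmod (u - v).
Proof.
  pose proof (Cmod_triangle (u - v) v) as H1. pose proof (Cmod_triangle (v - u) u) as H2.
  replace (u - v + v)%C with u in H1 by ring. replace (v - u + u)%C with v in H2 by ring.
  replace (v - u)%C with (- (u - v))%C in H2 by ring. rewrite Cmod_opp in H2.
  apply Rabs_le; lra.
Qed.

Lemma is_lim_seq_psum_sqmod (s : nat -> nat -> C) (x : nat -> C) L :
  (forall i, (i < L)%nat -> is_lim_seq (fun n => Cmod (s n i - x i)) 0) ->
  is_lim_seq (fun n => psum (sqmod (s n)) L) (psum (sqmod x) L).
Proof.
  intros H. apply is_lim_seq_psum. intros i Hi.
  assert (Hmod : is_lim_seq (fun n => Cmod (s n i)) (Cmod (x i))).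
  { apply is_lim_seq_spec. intros e. destruct (proj2 (is_lim_seq_spec _ _) (H i Hi) e) as [N HN].
    exists N. intros n Hn. specialize (HN n Hn). rewrite Rminus_0_r, Rabs_pos_eq in HN
      by apply Cmod_ge_0.
    eapply Rle_lt_trans; [apply Rabs_Cmod_sub_le|exact HN]. }
  unfold sqmod. replace (Cmod (x i) ^ 2) with (Cmod (x i) * (Cmod (x i) * 1)) by ring.
  now apply is_lim_seq_mult'; [|apply is_lim_seq_mult'; [|apply is_lim_seq_const]].
Qed.

Lemma is_lim_seq_psum_sqmod_0 (z : nat -> nat -> C) L :
  (forall i, is_lim_seq (fun n => Cmod (z n i)) 0) -> is_lim_seq (fun n => psum (sqmod (z n)) L) 0.
Proof.
  intros H. replace (Finite 0) with (Finite (psum (sqmod (fun _ => RtoC 0)) L)).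
  - apply is_lim_seq_psum_sqmod. intros i _. eapply is_lim_seq_ext; [|apply (H i)].
    intro n. simpl. now replace (z n i - 0)%C with (z n i) by ring.
  - f_equal. rewrite (psum_ext _ (fun _ => 0)), psum_const; [ring|].
    intros. unfold sqmod. rewrite Cmod_0. simpl; ring.
Qed.

Lemma psum_sqmod_le_of_lim (s : nat -> nat -> C) (x : nat -> C) L c :
  (forall i, (i < L)%nat -> is_lim_seq (fun n => Cmod (s n i - x i)) 0) ->
  (forall n, psum (sqmod (s n)) L <= c) -> psum (sqmod x) L <= c.
Proof.
  intros H Hc.
  apply (is_lim_seq_le _ _ _ _ Hc (is_lim_seq_psum_sqmod s x L H) (is_lim_seq_const c)).
Qed.

(** * Bounded operators and their matrices *)

Definition linear_op (T : (nat -> C) -> (nat -> C)) : Prop :=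
  forall (x y : nat -> C) (a : C), l2 x -> l2 y -> forall i,
    T (fun k => Cplus (x k) (Cmult a (y k))) i = Cplus (T x i) (Cmult a (T y i)).

Definition bounded_by (T : (nat -> C) -> (nat -> C)) (M : R) : Prop :=
  (forall x, l2 x -> l2 (T x)) /\ linear_op T /\ 0 <= M /\
  (forall x, l2 x -> l2norm (T x) <= M * l2norm x).

Lemma bounded_op_bounded_by T : bounded_op T -> exists M, bounded_by T M.
Proof.
  intros [H1 [H2 [M HM]]]. exists (Rabs M). split; [exact H1|]. split; [exact H2|].
  split; [apply Rabs_pos|]. intros x Hx. eapply Rle_trans; [now apply HM|].
  apply Rmult_le_compat_r; [apply l2norm_nonneg|apply Rle_abs].
Qed.

Lemma bounded_by_bounded_op T M : bounded_by T M -> bounded_op T.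
Proof. intros [H1 [H2 [_ H4]]]. split; [exact H1|split; [exact H2|now exists M]]. Qed.

Definition truncate (N : nat) (y : nat -> C) (k : nat) : C :=
  if Nat.ltb k N then y k else 0%C.

Lemma l2_truncate N y : l2 (truncate N y).
Proof.
  apply (l2_finite_support _ N). intros k Hk. unfold truncate.
  destruct (Nat.ltb_spec k N); [lia|reflexivity].
Qed.

Section LinearOperator.

Variable T : (nat -> C) -> (nat -> C).
Hypothesis T_linear : linear_op T.

Lemma linear_op_lincomb x y a i : l2 x -> l2 y ->
  T (fun k => x k + a * y k)%C i = (T x i + a * T y i)%C.
Proof. intros Hx Hy. exact (T_linear x y a Hx Hy i). Qed.

Lemma linear_op_zero i : T (fun _ => 0%C) i = 0%C.
Proof.
  pose proof (linear_op_lincomb (fun _ => 0%C) (fun _ => 0%C) 1%C i l2_zero l2_zero) as E.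
  cbv beta in E.
  replace (fun _ : nat => (RtoC 0 + 1 * RtoC 0)%C) with (fun _ : nat => RtoC 0) in E
    by (apply functional_extensionality; intros; ring).
  set (z := T (fun _ => 0%C) i) in *. clearbody z.
  replace z with (z + 1 * z - z)%C by ring. rewrite <- E. ring.
Qed.

Lemma linear_op_scal x a i : l2 x -> T (fun k => a * x k)%C i = (a * T x i)%C.
Proof.
  intros Hx. pose proof (linear_op_lincomb (fun _ => 0%C) x a i l2_zero Hx) as E.
  cbv beta in E.
  replace (fun k => (RtoC 0 + a * x k)%C) with (fun k => (a * x k)%C) in E
    by (apply functional_extensionality; intros; ring).
  rewrite E, linear_op_zero. ring.
Qed.

Lemma linear_op_add x y i : l2 x -> l2 y -> T (fun k => x k + y k)%C i = (T x i + T y i)%C.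
Proof.
  intros Hx Hy. pose proof (linear_op_lincomb x y 1%C i Hx Hy) as E.
  replace (fun k => (x k + 1 * y k)%C) with (fun k => (x k + y k)%C) in E
    by (apply functional_extensionality; intros; ring).
  rewrite E. ring.
Qed.

Lemma linear_op_sub x y i : l2 x -> l2 y -> T (fun k => x k - y k)%C i = (T x i - T y i)%C.
Proof.
  intros Hx Hy. pose proof (linear_op_lincomb x y (-1)%C i Hx Hy) as E.
  replace (fun k => (x k + -1 * y k)%C) with (fun k => (x k - y k)%C) in E
    by (apply functional_extensionality; intros; ring).
  rewrite E. ring.
Qed.

Lemma linear_op_truncate N y i : T (truncate N y) i = cpsum (fun j => y j * mat T i j)%C N.
Proof.
  induction N as [|N IH]; cbn [cpsum].
  - replace (truncate 0 y) with (fun _ : nat => RtoC 0) by now apply functional_extensionality.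
    apply linear_op_zero.
  - replace (truncate (S N) y) with (fun k => truncate N y k + y N * basis_vec N k)%C.
    + rewrite linear_op_lincomb by (apply l2_truncate || apply l2_basis_vec).
      now rewrite IH.
    + apply functional_extensionality; intro k. unfold truncate, basis_vec.
      destruct (Nat.ltb_spec k N), (Nat.ltb_spec k (S N)), (Nat.eqb_spec k N);
        try lia; subst; ring.
Qed.

End LinearOperator.

Section BoundedOperator.

Variables (T : (nat -> C) -> (nat -> C)) (M : R).
Hypothesis T_bounded : bounded_by T M.

Lemma is_lim_seq_matrix_expansion y i : l2 y ->
  is_lim_seq (fun N => Cmod (cpsum (fun j => y j * mat T i j)%C N - T y i)) 0.
Proof.
  destruct T_bounded as [T_l2 [T_linear [M_ge0 T_norm]]]. intros Hy.
  set (tail := fun N => Series (sqmod y) - psum (sqmod y) N).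
  assert (Err : forall N, Cmod (cpsum (fun j => y j * mat T i j)%C N - T y i) <= M * sqrt (tail N)).
  { intro N. rewrite <- Cmod_opp, Copp_minus_distr.
    rewrite <- linear_op_truncate, <- linear_op_sub by auto using l2_truncate.
    set (w := fun k => (y k - truncate N y k)%C).
    assert (Hw : forall n, psum (sqmod w) n <= tail N).
    { intro n. rewrite (psum_ext _ (fun k => if Nat.ltb k N then 0 else sqmod y k)).
      - rewrite psum_tail. unfold tail.
        pose proof (psum_le_Series _ (Nat.max n N) (sqmod_nonneg y) Hy). lra.
      - intros k _. unfold sqmod, w, truncate. destruct (Nat.ltb k N).
        + replace (y k - y k)%C with (RtoC 0) by ring. rewrite Cmod_0. simpl; ring.
        + now replace (y k - 0)%C with (y k) by ring. }
    destruct (l2_psum_bounded w _ Hw) as [Lw Nw].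
    eapply Rle_trans; [apply Cmod_le_l2norm; now apply T_l2|].
    eapply Rle_trans; [now apply T_norm|]. now apply Rmult_le_compat_l. }
  assert (Htail : is_lim_seq tail 0) by now apply is_lim_seq_Series_minus_psum.
  apply (is_lim_seq_le_le (fun _ => 0) _ (fun N => M * sqrt (tail N)));
    [intro N; split; [apply Cmod_ge_0|apply Err]|apply is_lim_seq_const|].
  replace (Finite 0) with (Finite (M * sqrt 0)) by (now rewrite sqrt_0, Rmult_0_r).
  apply is_lim_seq_mult'; [apply is_lim_seq_const|].
  apply is_lim_seq_continuous; [apply continuity_pt_sqrt; lra|exact Htail].
Qed.

Lemma psum_sqmod_column_le j L : psum (fun i => Cmod (mat T i j) ^ 2) L <= M ^ 2.
Proof.
  destruct T_bounded as [T_l2 [_ [M_ge0 T_norm]]].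
  eapply Rle_trans; [apply (psum_sqmod_le_l2norm (T (basis_vec j))), T_l2, l2_basis_vec|].
  apply pow_incr. split; [apply l2norm_nonneg|].
  eapply Rle_trans; [apply T_norm, l2_basis_vec|].
  pose proof (l2norm_basis_vec_le j). pose proof (l2norm_nonneg (basis_vec j)). nra.
Qed.

End BoundedOperator.

(** * Extraction of convergent subsequences *)

Definition strictly_increasing (f : nat -> nat) : Prop := forall n, (f n < f (S n))%nat.

Lemma strictly_increasing_ge f : strictly_increasing f -> forall n, (n <= f n)%nat.
Proof. intros H n. induction n; [lia|]. specialize (H n); lia. Qed.

Lemma strictly_increasing_lt f :
  strictly_increasing f -> forall m n, (m < n)%nat -> (f m < f n)%nat.
Proof. intros H m n Hmn. induction Hmn; [apply H|]. specialize (H m0); lia. Qed.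

Lemma strictly_increasing_comp f g :
  strictly_increasing f -> strictly_increasing g -> strictly_increasing (fun n => f (g n)).
Proof. intros Hf Hg n. now apply strictly_increasing_lt. Qed.

Lemma bolzano_weierstrass_R (a : nat -> R) (c : R) : (forall n, Rabs (a n) <= c) ->
  exists f (l : R), strictly_increasing f /\ is_lim_seq (fun n => a (f n)) l.
Proof.
  intros H.
  destruct (Bolzano_Weierstrass a (fun x => -c <= x <= c) (compact_P3 (-c) c)) as [l Hl].
  { intro n. specialize (H n). apply Rabs_le_between in H. lra. }
  (* from the cluster point [l], pick indices beyond [N] within [1/(k+1)] of [l] *)
  assert (F : forall k N : nat, {p : nat | (N <= p)%nat /\ Rabs (a p - l) < / (INR k + 1)}).
  { intros k N. apply constructive_indefinite_description.
    assert (Hpos : 0 < / (INR k + 1)) by (apply Rinv_0_lt_compat; pose proof (pos_INR k); lra).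
    destruct (Hl (disc l (mkposreal _ Hpos)) N) as [p [Hp1 Hp2]].
    - exists (mkposreal _ Hpos). intros y Hy; exact Hy.
    - exists p. split; auto. }
  set (f := fix f n := match n with
                       | O => proj1_sig (F 0%nat 0%nat)
                       | S n => proj1_sig (F (S n) (S (f n))) end).
  assert (Hf : strictly_increasing f).
  { intro n. change (f (S n)) with (proj1_sig (F (S n) (S (f n)))).
    pose proof (proj1 (proj2_sig (F (S n) (S (f n))))). lia. }
  assert (Hclose : forall n, Rabs (a (f n) - l) < / (INR n + 1)).
  { intros [|n]; [exact (proj2 (proj2_sig (F 0%nat 0%nat)))|].
    exact (proj2 (proj2_sig (F (S n) (S (f n))))). }
  exists f, l. split; [exact Hf|]. apply is_lim_seq_spec. intros e.
  destruct (archimed_cor1 e (cond_pos e)) as [N [HN1 HN2]]. exists N. intros n Hn.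
  eapply Rlt_trans; [apply Hclose|]. eapply Rle_lt_trans; [|exact HN1].
  apply Rinv_le_contravar; [apply lt_0_INR; lia|]. apply le_INR in Hn. lra.
Qed.

Lemma bolzano_weierstrass_C (a : nat -> C) (c : R) : (forall n, Cmod (a n) <= c) ->
  exists f (l : C), strictly_increasing f /\ is_lim_seq (fun n => Cmod (a (f n) - l)) 0.
Proof.
  intros H.
  assert (Hre : forall n, Rabs (fst (a n)) <= c).
  { intro n. eapply Rle_trans; [|apply H]. eapply Rle_trans; [|apply Rmax_Cmod]. apply Rmax_l. }
  destruct (bolzano_weierstrass_R _ c Hre) as [f1 [l1 [Hf1 Hl1]]].
  assert (Him : forall n, Rabs (snd (a (f1 n))) <= c).
  { intro n. eapply Rle_trans; [|apply H]. eapply Rle_trans; [|apply Rmax_Cmod]. apply Rmax_r. }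
  destruct (bolzano_weierstrass_R _ c Him) as [f2 [l2 [Hf2 Hl2]]].
  exists (fun n => f1 (f2 n)), (l1, l2). split; [now apply strictly_increasing_comp|].
  pose proof (is_lim_seq_subseq _ _ _ (eventually_subseq f2 Hf2) Hl1) as Hl1'.
  apply (is_lim_seq_le_le (fun _ => 0) _
    (fun n => sqrt 2 * (Rabs (fst (a (f1 (f2 n))) - l1) + Rabs (snd (a (f1 (f2 n))) - l2)))).
  - intro n. split; [apply Cmod_ge_0|]. eapply Rle_trans; [apply Cmod_2Rmax|].
    apply Rmult_le_compat_l; [apply sqrt_pos|].
    destruct (a (f1 (f2 n))) as [x y]. simpl. unfold Rminus.
    pose proof (Rabs_pos (x + - l1)). pose proof (Rabs_pos (y + - l2)).
    apply Rmax_lub; lra.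
  - apply is_lim_seq_const.
  - replace (Finite 0) with (Finite (sqrt 2 * (0 + 0))) by (f_equal; ring).
    apply is_lim_seq_mult'; [apply is_lim_seq_const|].
    apply is_lim_seq_plus'; apply (proj1 (is_lim_seq_abs_0 _));
      [replace (Finite 0) with (Finite (l1 - l1)) by (f_equal; ring)
      |replace (Finite 0) with (Finite (l2 - l2)) by (f_equal; ring)];
      apply is_lim_seq_minus'; auto using is_lim_seq_const.
Qed.

Lemma diagonal_extraction (u : nat -> nat -> C) (c : R) : (forall n j, Cmod (u n j) <= c) ->
  exists (phi : nat -> nat) (w : nat -> C), strictly_increasing phi /\
    forall j, is_lim_seq (fun n => Cmod (u (phi n) j - w j)) 0.
Proof.
  intros H.
  assert (Sel : forall (j : nat) (psi : nat -> nat), {p : (nat -> nat) * C |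
    strictly_increasing (fst p) /\ is_lim_seq (fun n => Cmod (u (psi (fst p n)) j - snd p)) 0}).
  { intros j psi. apply constructive_indefinite_description.
    destruct (bolzano_weierstrass_C (fun n => u (psi n) j) c (fun n => H _ _)) as [f [l Hfl]].
    now exists (f, l). }
  (* [Psi (S m)] refines [Psi m] so that coordinate [m] converges along it *)
  set (Psi := fix Psi m := match m with
                           | O => fun n : nat => n
                           | S m => fun n => Psi m (fst (proj1_sig (Sel m (Psi m))) n) end).
  assert (Psi_incr : forall m, strictly_increasing (Psi m)).
  { induction m as [|m IH]; [intro n; simpl; lia|]. simpl.
    destruct (Sel m (Psi m)) as [[f l] [Hf Hl]]. now apply strictly_increasing_comp. }
  assert (Psi_lim : forall m,
    is_lim_seq (fun n => Cmod (u (Psi (S m) n) m - snd (proj1_sig (Sel m (Psi m))))) 0).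
  { intro m. simpl. now destruct (Sel m (Psi m)) as [[f l] [Hf Hl]]. }
  assert (Psi_refines : forall m k, exists r, (forall t, (t <= r t)%nat) /\
                                          forall t, Psi (m + k)%nat t = Psi m (r t)).
  { intros m k. induction k as [|k [r [Hr1 Hr2]]].
    - exists (fun t => t). rewrite Nat.add_0_r. split; auto.
    - rewrite Nat.add_succ_r. simpl.
      destruct (Sel (m + k)%nat (Psi (m + k)%nat)) as [[f l] [Hf Hl]]. simpl.
      exists (fun t => r (f t)). split; [|intro t; apply Hr2].
      intro t. pose proof (strictly_increasing_ge f Hf t). specialize (Hr1 (f t)). lia. }
  exists (fun n => Psi (S n) n), (fun j => snd (proj1_sig (Sel j (Psi j)))). split.
  - intro n. change (Psi (S (S n)) (S n))
      with (Psi (S n) (fst (proj1_sig (Sel (S n) (Psi (S n)))) (S n))).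
    destruct (Sel (S n) (Psi (S n))) as [[f l] [Hf Hl]]. cbn [fst proj1_sig].
    apply strictly_increasing_lt; auto. pose proof (strictly_increasing_ge f Hf (S n)). lia.
  - intro j. apply is_lim_seq_spec. intros e.
    destruct (proj2 (is_lim_seq_spec _ _) (Psi_lim j) e) as [N HN].
    exists (Nat.max N j). intros n Hn.
    destruct (Psi_refines (S j) (n - j)%nat) as [r [Hr1 Hr2]].
    replace (S j + (n - j))%nat with (S n) in Hr2 by lia. rewrite Hr2. apply HN.
    specialize (Hr1 n). lia.
Qed.

(** * Square-summable sequences indexed by Z *)

(* [zdec] enumerates Z as 0, -1, 1, -2, 2, ...; [zenc] is its inverse. *)
Definition zdec (k : nat) : Z :=
  if Nat.even k then Z.of_nat (Nat.div2 k) else (- Z.of_nat (S (Nat.div2 k)))%Z.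

Definition zenc (p : Z) : nat :=
  match p with
  | Z0 => 0%nat
  | Zpos q => (2 * Pos.to_nat q)%nat
  | Zneg q => (2 * (Pos.to_nat q - 1) + 1)%nat
  end.

Lemma zdec_even n : zdec (2 * n) = Z.of_nat n.
Proof. unfold zdec. now rewrite Nat.even_even, Nat.div2_double. Qed.

Lemma zdec_odd n : zdec (2 * n + 1) = (- Z.of_nat (S n))%Z.
Proof. unfold zdec. now rewrite Nat.even_odd, Nat.div2_odd'. Qed.

Lemma zdec_zenc p : zdec (zenc p) = p.
Proof.
  destruct p as [|q|q]; unfold zenc; [reflexivity| |].
  - rewrite zdec_even. apply positive_nat_Z.
  - rewrite zdec_odd. pose proof (Pos2Nat.is_pos q).
    replace (S (Pos.to_nat q - 1)) with (Pos.to_nat q) by lia. now rewrite positive_nat_Z.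
Qed.

Lemma zenc_zdec k : zenc (zdec k) = k.
Proof.
  destruct (Nat.Even_or_Odd k) as [[n ->]|[n ->]].
  - rewrite zdec_even. destruct n as [|n]; [reflexivity|].
    change (Z.of_nat (S n)) with (Z.pos (Pos.of_succ_nat n)). unfold zenc.
    now rewrite SuccNat2Pos.id_succ.
  - rewrite zdec_odd. change (- Z.of_nat (S n))%Z with (Z.neg (Pos.of_succ_nat n)). unfold zenc.
    rewrite SuccNat2Pos.id_succ. lia.
Qed.

Lemma zenc_inj p q : zenc p = zenc q -> p = q.
Proof. intros H. now rewrite <- (zdec_zenc p), <- (zdec_zenc q), H. Qed.

Lemma zenc_ge_opp p : (- p <= Z.of_nat (zenc p))%Z.
Proof.
  destruct p as [|q|q]; unfold zenc; [simpl; lia|lia|].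
  pose proof (Pos2Nat.is_pos q). pose proof (positive_nat_Z q).
  change (- Z.neg q)%Z with (Z.pos q). lia.
Qed.

Lemma psum_reindex_zenc_le (g : nat -> R) (h : nat -> Z) N :
  (forall k, 0 <= g k) -> (forall j j', h j = h j' -> j = j') ->
  exists K, psum (fun j => g (zenc (h j))) N <= psum g K.
Proof.
  intros Hg Hh. destruct (finite_bound (fun j => zenc (h j)) N) as [K HK]. exists K.
  apply psum_reindex_inj_le; auto. intros j j' _ _ E. now apply Hh, zenc_inj.
Qed.

Definition sqmodZ (b : Z -> C) (k : nat) : R := Cmod (b (zdec k)) ^ 2.

Definition l2Z_sqnorm_le (b : Z -> C) (G : R) : Prop := forall K, psum (sqmodZ b) K <= G.

Lemma sqmodZ_nonneg b k : 0 <= sqmodZ b k.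
Proof. apply pow_le, Cmod_ge_0. Qed.

Lemma l2Z_sqnorm_le_nonneg b G : l2Z_sqnorm_le b G -> 0 <= G.
Proof. intros H. apply (H 0%nat). Qed.

Lemma l2Z_sqnorm_bounded b : l2Z b -> exists G, l2Z_sqnorm_le b G.
Proof.
  intros [Hpos Hneg].
  set (a1 := fun n : nat => Cmod (b (Z.of_nat n)) ^ 2).
  set (a2 := fun n : nat => Cmod (b (- Z.of_nat n)%Z) ^ 2).
  assert (P1 : forall n, 0 <= a1 n) by (intro; apply pow_le, Cmod_ge_0).
  assert (P2 : forall n, 0 <= a2 n) by (intro; apply pow_le, Cmod_ge_0).
  exists (Series a1 + Series a2). intro K.
  apply Rle_trans with (psum (sqmodZ b) (2 * K));
    [apply psum_mono; [apply sqmodZ_nonneg|lia]|].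
  assert (Shift : psum a2 (S K) = a2 0%nat + psum (fun n => a2 (S n)) K).
  { induction K as [|K IH]; cbn [psum] in *; lra. }
  assert (Split : psum (sqmodZ b) (2 * K) = psum a1 K + psum (fun n => a2 (S n)) K).
  { clear Shift. induction K as [|K IH]; [simpl; lra|].
    replace (2 * S K)%nat with (S (S (2 * K))) by lia. cbn [psum]. rewrite IH.
    replace (S (2 * K)) with (2 * K + 1)%nat by lia.
    unfold sqmodZ, a1, a2. rewrite zdec_even, zdec_odd. lra. }
  pose proof (psum_le_Series a1 K P1 Hpos). pose proof (psum_le_Series a2 (S K) P2 Hneg).
  pose proof (P2 0%nat). lra.
Qed.

Lemma psum_row_sqmod_le b G i N : l2Z_sqnorm_le b G ->
  psum (fun j => Cmod (b (Z.of_nat i - Z.of_nat j)%Z) ^ 2) N <= G.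
Proof.
  intros H.
  destruct (psum_reindex_zenc_le (sqmodZ b) (fun j => (Z.of_nat i - Z.of_nat j)%Z) N
              (sqmodZ_nonneg b)) as [K HK]; [intros; lia|].
  eapply Rle_trans; [|apply (H K)]. eapply Rle_trans; [|exact HK].
  right. apply psum_ext. intros. unfold sqmodZ. now rewrite zdec_zenc.
Qed.

Lemma Cmod_sqr_le_l2Z b G p : l2Z_sqnorm_le b G -> Cmod (b p) ^ 2 <= G.
Proof.
  intros H. eapply Rle_trans; [|apply (H (S (zenc p)))].
  replace (Cmod (b p) ^ 2) with (sqmodZ b (zenc p)) by (unfold sqmodZ; now rewrite zdec_zenc).
  apply psum_term_le; [apply sqmodZ_nonneg|lia].
Qed.

Lemma l2_toeplitz_row b G x i : l2Z_sqnorm_le b G -> l2 x ->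
  l2 (fun j => b (Z.of_nat i - Z.of_nat j)%Z * x j)%C.
Proof.
  intros Hb Hx. apply (l2_dominated x x _ G 0); auto; [now apply (l2Z_sqnorm_le_nonneg b)|lra|].
  intro k. unfold sqmod. rewrite Cmod_mult, Rpow_mult_distr.
  pose proof (Cmod_sqr_le_l2Z b G (Z.of_nat i - Z.of_nat k) Hb). pose proof (sqmod_nonneg x k).
  unfold sqmod in *. nra.
Qed.

Lemma psum_count_zenc_lt j Q L :
  psum (fun i => if Nat.ltb (zenc (Z.of_nat i - Z.of_nat j)) Q then 1 else 0) L <= INR Q.
Proof.
  set (ind := fun k => if Nat.ltb k Q then 1 else 0).
  destruct (psum_reindex_zenc_le ind (fun i => (Z.of_nat i - Z.of_nat j)%Z) L) as [K HK].
  - intro k. unfold ind. destruct (Nat.ltb k Q); lra.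
  - intros; lia.
  - eapply Rle_trans; [exact HK|].
    replace (psum ind K) with (psum (fun k => if Nat.ltb k Q then 1 else 0) K) by reflexivity.
    rewrite psum_head, psum_const, Rmult_1_r. apply le_INR. lia.
Qed.

Definition bhead (Q : nat) (b : Z -> C) (p : Z) : C :=
  if Nat.ltb (zenc p) Q then b p else RtoC 0.

Definition btail (Q : nat) (b : Z -> C) (p : Z) : C :=
  if Nat.ltb (zenc p) Q then RtoC 0 else b p.

Lemma sqmodZ_bhead Q b k : sqmodZ (bhead Q b) k = if Nat.ltb k Q then sqmodZ b k else 0.
Proof.
  unfold sqmodZ, bhead. rewrite zenc_zdec. destruct (Nat.ltb k Q); [reflexivity|].
  rewrite Cmod_0. simpl; ring.
Qed.

Lemma sqmodZ_btail Q b k : sqmodZ (btail Q b) k = if Nat.ltb k Q then 0 else sqmodZ b k.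
Proof.
  unfold sqmodZ, btail. rewrite zenc_zdec. destruct (Nat.ltb k Q); [|reflexivity].
  rewrite Cmod_0. simpl; ring.
Qed.

Lemma l2Z_sqnorm_le_dominated b b' G : (forall k, sqmodZ b' k <= sqmodZ b k) ->
  l2Z_sqnorm_le b G -> l2Z_sqnorm_le b' G.
Proof. intros H Hb K. eapply Rle_trans; [|apply (Hb K)]. apply psum_le; auto. Qed.

Lemma l2Z_sqnorm_le_bhead b G Q : l2Z_sqnorm_le b G -> l2Z_sqnorm_le (bhead Q b) G.
Proof.
  apply l2Z_sqnorm_le_dominated. intro k. rewrite sqmodZ_bhead.
  pose proof (sqmodZ_nonneg b k). destruct (Nat.ltb k Q); lra.
Qed.

Lemma l2Z_sqnorm_le_btail b G Q : l2Z_sqnorm_le b G -> l2Z_sqnorm_le (btail Q b) G.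
Proof.
  apply l2Z_sqnorm_le_dominated. intro k. rewrite sqmodZ_btail.
  pose proof (sqmodZ_nonneg b k). destruct (Nat.ltb k Q); lra.
Qed.

Lemma l2Z_sqnorm_le_btail_Series b Q : ex_series (sqmodZ b) ->
  l2Z_sqnorm_le (btail Q b) (Series (sqmodZ b) - psum (sqmodZ b) Q).
Proof.
  intros Hb K. rewrite (psum_ext _ _ K (fun k _ => sqmodZ_btail Q b k)), psum_tail.
  pose proof (psum_le_Series _ (Nat.max K Q) (sqmodZ_nonneg b) Hb). lra.
Qed.

(** * Operators whose diagonals vanish at infinity *)

Definition diagonals_vanish (V : (nat -> C) -> (nat -> C)) : Prop := forall p : Z,
  is_lim_seq (fun n => Cmod (mat V n (Z.to_nat (Z.of_nat n + p)%Z))) 0.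

Lemma eventually_forall_lt (P : nat -> nat -> Prop) :
  (forall k, exists N, forall n, (N <= n)%nat -> P k n) ->
  forall Q, exists N, forall k n, (k < Q)%nat -> (N <= n)%nat -> P k n.
Proof.
  intros H Q. induction Q as [|Q [N1 H1]]; [exists 0%nat; lia|].
  destruct (H Q) as [N2 H2]. exists (Nat.max N1 N2). intros k n Hk Hn.
  destruct (Nat.eq_dec k Q); [subst; apply H2; lia|apply H1; lia].
Qed.

(* Only the diagonals [i - j] with [zenc (i - j) < Q] matter; on each of them the entries
   are eventually below [eta], and for [j >= J] every such entry is far down its diagonal. *)
Lemma diagonals_vanish_uniform V : diagonals_vanish V -> forall eta, 0 < eta -> forall Q,
  exists J, forall i j, (J <= j)%nat -> (zenc (Z.of_nat i - Z.of_nat j) < Q)%nat ->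
    Cmod (mat V i j) <= eta.
Proof.
  intros HV eta Heta Q.
  assert (H : forall k, exists N, forall n, (N <= n)%nat ->
                Cmod (mat V n (Z.to_nat (Z.of_nat n + - zdec k)%Z)) <= eta).
  { intro k. destruct (proj2 (is_lim_seq_spec _ _) (HV (- zdec k)%Z) (mkposreal eta Heta))
      as [N HN].
    exists N. intros n Hn. specialize (HN n Hn). simpl in HN.
    rewrite Rminus_0_r, Rabs_pos_eq in HN by apply Cmod_ge_0. lra. }
  destruct (eventually_forall_lt _ H Q) as [N HN]. exists (N + Q)%nat. intros i j Hj Hq.
  pose proof (zenc_ge_opp (Z.of_nat i - Z.of_nat j)).
  specialize (HN _ i Hq ltac:(lia)). rewrite zdec_zenc in HN.
  now replace (Z.to_nat (Z.of_nat i + - (Z.of_nat i - Z.of_nat j))) with j in HN by lia.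
Qed.

(** * Schur multiplication by a Toeplitz matrix *)

(* The [i]-th coordinate of [toeplitz_schur V b x] is [sum_j b_(i-j) V_(i,j) x_j]: apply [V]
   to [x] weighted by the [i]-th row of the Toeplitz matrix [(b_(i-j))] and read off
   coordinate [i]. *)
Definition toeplitz_schur (V : (nat -> C) -> (nat -> C)) (b : Z -> C) (x : nat -> C) (i : nat)
  : C := V (fun j => b (Z.of_nat i - Z.of_nat j)%Z * x j)%C i.

Section ToeplitzSchur.

Variables (V : (nat -> C) -> (nat -> C)) (M : R).
Hypothesis V_bounded : bounded_by V M.

Let V_linear : linear_op V := proj1 (proj2 V_bounded).
Let M_ge0 : 0 <= M := proj1 (proj2 (proj2 V_bounded)).

Lemma mat_toeplitz_schur b i j :
  mat (toeplitz_schur V b) i j = (b (Z.of_nat i - Z.of_nat j)%Z * mat V i j)%C.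
Proof.
  unfold mat, toeplitz_schur.
  replace (fun k => (b (Z.of_nat i - Z.of_nat k)%Z * basis_vec j k)%C)
    with (fun k => (b (Z.of_nat i - Z.of_nat j)%Z * basis_vec j k)%C).
  - apply linear_op_scal; [exact V_linear|apply l2_basis_vec].
  - apply functional_extensionality; intro k. unfold basis_vec.
    destruct (Nat.eqb_spec k j); [now subst|ring].
Qed.

Lemma Cmod_toeplitz_row_sum_sqr_le b G W x i N :
  l2Z_sqnorm_le b G -> (forall j, 0 <= W j) ->
  (forall j, b (Z.of_nat i - Z.of_nat j)%Z <> 0%C -> Cmod (mat V i j) ^ 2 <= W j) ->
  Cmod (cpsum (fun j => b (Z.of_nat i - Z.of_nat j)%Z * x j * mat V i j)%C N) ^ 2
  <= G * psum (fun j => W j * sqmod x j) N.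
Proof.
  intros Hb HW0 HW.
  set (c := fun j => b (Z.of_nat i - Z.of_nat j)%Z).
  set (d := fun j => if Req_EM_T (Cmod (c j)) 0 then RtoC 0 else (mat V i j * x j)%C).
  replace (cpsum _ N) with (cpsum (fun j => c j * d j)%C N).
  2: { induction N as [|N IH]; cbn [cpsum]; [reflexivity|]. rewrite IH. f_equal.
       unfold d. destruct (Req_EM_T (Cmod (c N)) 0) as [E|E].
       - apply Cmod_eq_0 in E. unfold c in E. rewrite E. ring.
       - unfold c. ring. }
  eapply Rle_trans; [apply Cmod_cpsum_mult_sqr_le|].
  apply Rmult_le_compat; try (apply psum_nonneg, sqmod_nonneg).
  - apply (psum_row_sqmod_le b G i N Hb).
  - apply psum_le. intros j _. unfold sqmod, d. destruct (Req_EM_T (Cmod (c j)) 0) as [E|E].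
    + rewrite Cmod_0. pose proof (HW0 j). pose proof (sqmod_nonneg x j). unfold sqmod in *.
      simpl; nra.
    + rewrite Cmod_mult, Rpow_mult_distr. apply Rmult_le_compat_r; [apply pow_le, Cmod_ge_0|].
      apply HW. intros E'. apply E. unfold c. rewrite E'. apply Cmod_0.
Qed.

(* Cauchy-Schwarz in each row and Fubini: the weight [W i j] may replace [|V_(i,j)|^2]
   wherever [b_(i-j) <> 0]. *)
Lemma psum_sqmod_toeplitz_schur_le b G W x L R :
  l2Z_sqnorm_le b G -> (forall i j, 0 <= W i j) ->
  (forall i j, b (Z.of_nat i - Z.of_nat j)%Z <> 0%C -> Cmod (mat V i j) ^ 2 <= W i j) ->
  l2 x -> (forall N, psum (fun j => sqmod x j * psum (fun i => W i j) L) N <= R) ->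
  psum (sqmod (toeplitz_schur V b x)) L <= G * R.
Proof.
  intros Hb HW0 HW Hx HR.
  set (y := fun i j => (b (Z.of_nat i - Z.of_nat j)%Z * x j)%C).
  set (s := fun N i => cpsum (fun j => y i j * mat V i j)%C N).
  apply (psum_sqmod_le_of_lim s).
  { intros i _. exact (is_lim_seq_matrix_expansion V M V_bounded (y i) i
                        (l2_toeplitz_row b G x i Hb Hx)). }
  intro N. apply Rle_trans with (psum (fun i => G * psum (fun j => W i j * sqmod x j) N) L).
  - apply psum_le. intros i _.
    exact (Cmod_toeplitz_row_sum_sqr_le b G (W i) x i N Hb (HW0 i) (HW i)).
  - rewrite psum_scal. apply Rmult_le_compat_l; [now apply (l2Z_sqnorm_le_nonneg b)|].
    rewrite psum_swap. eapply Rle_trans; [|apply (HR N)]. right. apply psum_ext. intros j _.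
    rewrite <- psum_scal. apply psum_ext. intros; ring.
Qed.

Lemma psum_sqmod_toeplitz_schur_le_l2 b G x L D :
  l2Z_sqnorm_le b G -> l2 x -> (forall N, psum (sqmod x) N <= D) ->
  psum (sqmod (toeplitz_schur V b x)) L <= G * (M ^ 2 * D).
Proof.
  intros Hb Hx HD. apply (psum_sqmod_toeplitz_schur_le b G (fun i j => Cmod (mat V i j) ^ 2));
    auto using pow_le, Cmod_ge_0, Rle_refl.
  intro N. apply Rle_trans with (psum (fun j => M ^ 2 * sqmod x j) N).
  - apply psum_le. intros j _. rewrite Rmult_comm. apply Rmult_le_compat_r; [apply sqmod_nonneg|].
    now apply psum_sqmod_column_le.
  - rewrite psum_scal. apply Rmult_le_compat_l; [apply pow_le, M_ge0|apply HD].
Qed.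

Lemma toeplitz_schur_bounded_by b G : l2Z_sqnorm_le b G ->
  bounded_by (toeplitz_schur V b) (sqrt G * M).
Proof.
  intros Hb. pose proof (l2Z_sqnorm_le_nonneg b G Hb) as G_ge0.
  assert (Hbound : forall x, l2 x -> l2 (toeplitz_schur V b x) /\
            l2norm (toeplitz_schur V b x) <= sqrt G * M * l2norm x).
  { intros x Hx. replace (sqrt G * M * l2norm x) with (sqrt (G * (M ^ 2 * l2norm x ^ 2))).
    - apply l2_psum_bounded. intro L. apply psum_sqmod_toeplitz_schur_le_l2; auto.
      intro; now apply psum_sqmod_le_l2norm.
    - rewrite <- Rpow_mult_distr, sqrt_mult, sqrt_pow2 by
        (auto using pow2_ge_0, Rmult_le_pos, l2norm_nonneg). ring. }
  split; [|split; [|split]].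
  - intros x Hx. apply (Hbound x Hx).
  - intros x y a Hx Hy i. unfold toeplitz_schur.
    rewrite <- V_linear by (eapply l2_toeplitz_row; eauto). f_equal.
    apply functional_extensionality; intro k. ring.
  - apply Rmult_le_pos; [apply sqrt_pos|exact M_ge0].
  - intros x Hx. apply (Hbound x Hx).
Qed.

Lemma toeplitz_schur_head_tail b G Q x i : l2Z_sqnorm_le b G -> l2 x ->
  toeplitz_schur V b x i
  = (toeplitz_schur V (bhead Q b) x i + toeplitz_schur V (btail Q b) x i)%C.
Proof.
  intros Hb Hx. unfold toeplitz_schur.
  rewrite <- linear_op_add by (auto; eapply l2_toeplitz_row;
    eauto using l2Z_sqnorm_le_bhead, l2Z_sqnorm_le_btail).
  f_equal. apply functional_extensionality; intro j. unfold bhead, btail.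
  destruct (Nat.ltb _ Q); ring.
Qed.

Lemma psum_sqmod_toeplitz_schur_bhead_le b G Q J eta z D L :
  l2Z_sqnorm_le b G -> 0 <= eta ->
  (forall i j, (J <= j)%nat -> (zenc (Z.of_nat i - Z.of_nat j) < Q)%nat ->
     Cmod (mat V i j) <= eta) ->
  l2 z -> (forall N, psum (sqmod z) N <= D) ->
  psum (sqmod (toeplitz_schur V (bhead Q b) z)) L
  <= G * (M ^ 2 * psum (sqmod z) J + eta ^ 2 * INR Q * D).
Proof.
  intros Hb Heta HJ Hz HD.
  set (W := fun i j => if Nat.ltb j J then Cmod (mat V i j) ^ 2
                       else if Nat.ltb (zenc (Z.of_nat i - Z.of_nat j)) Q then eta ^ 2 else 0).
  apply (psum_sqmod_toeplitz_schur_le (bhead Q b) G W); auto using l2Z_sqnorm_le_bhead.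
  - intros i j. unfold W. destruct (Nat.ltb j J); [apply pow_le, Cmod_ge_0|].
    destruct (Nat.ltb _ Q); [apply pow_le|]; lra.
  - intros i j Hbij. unfold W, bhead in *. destruct (Nat.ltb_spec j J); [lra|].
    destruct (Nat.ltb_spec (zenc (Z.of_nat i - Z.of_nat j)) Q); [|easy].
    apply pow_incr. split; [apply Cmod_ge_0|now apply HJ].
  - intro N.
    apply Rle_trans with (psum (fun j => M ^ 2 * (if Nat.ltb j J then sqmod z j else 0)
                                         + eta ^ 2 * INR Q * sqmod z j) N).
    + apply psum_le. intros j _. pose proof (sqmod_nonneg z j).
      assert (0 <= eta ^ 2 * INR Q) by (apply Rmult_le_pos; [apply pow2_ge_0|apply pos_INR]).
      unfold W. destruct (Nat.ltb_spec j J).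
      * pose proof (psum_sqmod_column_le V M V_bounded j L). nra.
      * rewrite (psum_ext _ (fun i => eta ^ 2 *
          (if Nat.ltb (zenc (Z.of_nat i - Z.of_nat j)) Q then 1 else 0)))
          by (intros; destruct (Nat.ltb _ Q); ring).
        rewrite psum_scal.
        pose proof (Rmult_le_compat_l (sqmod z j * eta ^ 2) _ _
                      (Rmult_le_pos _ _ (sqmod_nonneg z j) (pow2_ge_0 eta))
                      (psum_count_zenc_lt j Q L)).
        nra.
    + rewrite psum_plus, !psum_scal, psum_head.
      pose proof (psum_mono (sqmod z) (Nat.min N J) J (sqmod_nonneg z) ltac:(lia)).
      pose proof (HD N). pose proof (pow2_ge_0 M).
      assert (0 <= eta ^ 2 * INR Q) by (apply Rmult_le_pos; [apply pow2_ge_0|apply pos_INR]).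
      nra.
Qed.

(* Split [b] into the diagonals [zenc (i - j) < Q] and the rest: the rest is small in
   [l^2(Z)], while on the finitely many remaining diagonals [V] is small beyond column [J],
   and the first [J] coordinates of [z n] tend to zero. *)
Lemma toeplitz_schur_eventually_small b G z D :
  l2Z_sqnorm_le b G -> diagonals_vanish V ->
  (forall n, l2 (z n)) -> (forall n N, psum (sqmod (z n)) N <= D) ->
  (forall j, is_lim_seq (fun n => Cmod (z n j)) 0) ->
  forall e, 0 < e -> exists N, forall n, (N <= n)%nat -> forall L,
    psum (sqmod (toeplitz_schur V b (z n))) L <= e.
Proof.
  intros Hb HV Hz HD Hlim e He.
  pose proof (l2Z_sqnorm_le_nonneg b G Hb) as G_ge0.
  assert (D_ge0 : 0 <= D) by apply (HD 0%nat 0%nat).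
  destruct (ex_series_psum_bounded (sqmodZ b) G (sqmodZ_nonneg b) Hb) as [Hser _].
  set (tail := fun Q => Series (sqmodZ b) - psum (sqmodZ b) Q).
  destruct (is_lim_seq_0_eventually_le (fun Q => 2 * (M ^ 2 * D) * tail Q) (e / 2)) as [Q HQ];
    [|lra|].
  { replace (Finite 0) with (Finite (2 * (M ^ 2 * D) * 0)) by (f_equal; ring).
    apply is_lim_seq_mult'; [apply is_lim_seq_const|now apply is_lim_seq_Series_minus_psum]. }
  specialize (HQ Q (le_n Q)).
  destruct (exists_pos_mult_le (2 * G * INR Q * D) (e / 4)) as [s [Hs Hs']];
    [pose proof (pos_INR Q); apply Rmult_le_pos; [nra|lra]|lra|].
  destruct (diagonals_vanish_uniform V HV (sqrt s) (sqrt_lt_R0 _ Hs) Q) as [J HJ].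
  destruct (is_lim_seq_0_eventually_le
              (fun n => 2 * G * M ^ 2 * psum (sqmod (z n)) J) (e / 4)) as [N HN]; [|lra|].
  { replace (Finite 0) with (Finite (2 * G * M ^ 2 * 0)) by (f_equal; ring).
    apply is_lim_seq_mult'; [apply is_lim_seq_const|now apply is_lim_seq_psum_sqmod_0]. }
  exists N. intros n Hn L.
  pose proof (psum_sqmod_toeplitz_schur_bhead_le b G Q J (sqrt s) (z n) D L Hb (sqrt_pos s)
                HJ (Hz n) (HD n)) as Head.
  rewrite pow2_sqrt in Head by lra.
  pose proof (psum_sqmod_toeplitz_schur_le_l2 (btail Q b) (tail Q) (z n) L D
                (l2Z_sqnorm_le_btail_Series b Q Hser) (Hz n) (HD n)) as Tail.
  assert (Split : psum (sqmod (toeplitz_schur V b (z n))) L <=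
            2 * psum (sqmod (toeplitz_schur V (bhead Q b) (z n))) L
            + 2 * psum (sqmod (toeplitz_schur V (btail Q b) (z n))) L).
  { rewrite <- !psum_scal, <- psum_plus. apply psum_le. intros i _. unfold sqmod.
    rewrite (toeplitz_schur_head_tail b G Q (z n) i Hb (Hz n)). apply Cmod_add_sqr_le. }
  specialize (HN n Hn). cbv beta in HN. nra.
Qed.

(* The hypotheses on [z] say that [z n] tends weakly to [0]. *)
Lemma toeplitz_schur_weakly_null b G z D :
  l2Z_sqnorm_le b G -> diagonals_vanish V ->
  (forall n, l2 (z n)) -> (forall n N, psum (sqmod (z n)) N <= D) ->
  (forall j, is_lim_seq (fun n => Cmod (z n j)) 0) ->
  is_lim_seq (fun n => l2norm (toeplitz_schur V b (z n))) 0.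
Proof.
  intros Hb HV Hz HD Hlim. apply is_lim_seq_spec. intros eps.
  pose proof (cond_pos eps) as Heps.
  destruct (toeplitz_schur_eventually_small b G z D Hb HV Hz HD Hlim (eps / 2 * (eps / 2)))
    as [N HN]; [nra|].
  exists N. intros n Hn.
  destruct (l2_psum_bounded _ _ (HN n Hn)) as [_ Hnorm].
  rewrite sqrt_square in Hnorm by lra.
  rewrite Rminus_0_r, Rabs_pos_eq by apply l2norm_nonneg. lra.
Qed.

(* Extract a coordinatewise convergent subsequence [u (phi n) -> w]; then
   [u (phi n) - w] is weakly null, so its image tends to [0]. *)
Lemma toeplitz_schur_compact b G : l2Z_sqnorm_le b G -> diagonals_vanish V ->
  compact_op (toeplitz_schur V b).
Proof.
  intros Hb HV u Hu [C0 HC0].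
  destruct (diagonal_extraction u C0) as [phi [w [Hphi Hw]]].
  { intros n j. eapply Rle_trans; [now apply Cmod_le_l2norm|apply HC0]. }
  assert (Hu2 : forall n N, psum (sqmod (u n)) N <= C0 ^ 2).
  { intros n N. eapply Rle_trans; [now apply psum_sqmod_le_l2norm|].
    apply pow_incr. split; [apply l2norm_nonneg|apply HC0]. }
  assert (Hw2 : forall N, psum (sqmod w) N <= C0 ^ 2).
  { intro N. apply (psum_sqmod_le_of_lim (fun n => u (phi n))); auto. }
  assert (Lw : l2 w) by apply (l2_psum_bounded w _ Hw2).
  set (z := fun n j => (u (phi n) j + (-1) * w j)%C).
  assert (Hz : forall n, l2 (z n)) by (intro n; now apply l2_lincomb).
  assert (Hz2 : forall n N, psum (sqmod (z n)) N <= 2 * C0 ^ 2 + 2 * C0 ^ 2).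
  { intros n N. eapply Rle_trans.
    - apply (psum_le _ (fun k => 2 * sqmod (u (phi n)) k + 2 * sqmod (fun j => (-1) * w j)%C k)).
      intros k _. apply Cmod_add_sqr_le.
    - rewrite psum_plus, !psum_scal.
      rewrite (psum_ext (sqmod (fun j => (-1) * w j)%C) (sqmod w))
        by (intros; unfold sqmod; now rewrite Cmod_mult, Cmod_R, Rabs_m1, Rmult_1_l).
      pose proof (Hu2 (phi n) N). pose proof (Hw2 N). lra. }
  assert (Hzlim : forall j, is_lim_seq (fun n => Cmod (z n j)) 0).
  { intro j. eapply is_lim_seq_ext; [|apply (Hw j)]. intro n. unfold z. f_equal. ring. }
  pose proof (toeplitz_schur_bounded_by b G Hb) as [K_l2 [K_linear _]].
  exists phi, (toeplitz_schur V b w). split; [exact Hphi|]. split; [now apply K_l2|].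
  eapply is_lim_seq_ext; [|apply (toeplitz_schur_weakly_null b G z _ Hb HV Hz Hz2 Hzlim)].
  intro n. cbv beta. f_equal. apply functional_extensionality; intro i. unfold z.
  rewrite (linear_op_lincomb _ K_linear) by auto. ring.
Qed.

End ToeplitzSchur.

Theorem lemma2 (V : (nat -> C) -> (nat -> C)) (b : Z -> C) :
  bounded_op V ->
  ~ compact_op V ->
  (forall p : Z,
     is_lim_seq (fun n => Cmod (mat V n (Z.to_nat (Z.of_nat n + p)%Z))) 0) ->
  l2Z b ->
  exists K : (nat -> C) -> (nat -> C),
    bounded_op K /\
    (forall i j : nat, mat K i j = Cmult (b (Z.of_nat i - Z.of_nat j)%Z) (mat V i j)) /\
    compact_op K.
Proof.
  intros HV _ Hdiag Hb.
  destruct (bounded_op_bounded_by V HV) as [M HM].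
  destruct (l2Z_sqnorm_bounded b Hb) as [G HG].
  exists (toeplitz_schur V b). split; [|split].
  - exact (bounded_by_bounded_op _ _ (toeplitz_schur_bounded_by V M HM b G HG)).
  - exact (mat_toeplitz_schur V M HM b).
  - exact (toeplitz_schur_compact V M HM b G HG Hdiag).
Qed.
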